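(* Let $\mathbb{K}$ be an algebraically closed field of characteristic zero, $\mathcal{C}\subset\mathbb{K}^2$ an affine irreducible plane curve, $A=(a,b)\in\mathbb{K}^2$, and assume that $\mathcal{C}_0\neq\emptyset$, that $\mathcal{C}$ is not a circle centered at $A$, and that $\mathcal{C}$ is not a line passing through $A$. Then there is no infinite set $D\subset\mathbb{K}\setminus\{0\}$ together with an irreducible algebraic curve $\mathcal{M}\subset\mathbb{K}^2$ such that $\mathcal{M}$ is a component of $\mathfrak{C}(\mathcal{C},A,d)$ for every $d\in D$; that is, at most finitely many distances $d$ give conchoids $\mathfrak{C}(\mathcal{C},A,d)$ all sharing a common component.
   Context: For $\mathcal{C}$ defined by an irreducible polynomial $f(y_1,y_2)$ and $d\in\mathbb{K}\setminus\{0\}$: $\mathfrak{B}(\mathcal{C},A,d)\subset\mathbb{K}^2\times\mathbb{K}^2\times\mathbb{K}$ is the set of $(\bar x,\bar y,w)$ with $f(y_1,y_2)=0$, $(x_1-y_1)^2+(x_2-y_2)^2=d^2$, $(y_2-b)(x_1-y_1)-(y_1-a)(x_2-y_2)=0$, $w((y_1-a)^2+(y_2-b)^2)=1$; the conchoid $\mathfrak{C}(\mathcal{C},A,d)$ is the Zariski closure in $\mathbb{K}^2$ of the projection of $\mathfrak{B}(\mathcal{C},A,d)$ onto the $\bar x$ coordinates. $\mathcal{C}_0=\{(p_1,p_2)\in\mathcal{C}:(p_1-a)^2+(p_2-b)^2\neq0\}$. A circle centered at $A$ of radius $r$ is $(y_1-a)^2+(y_2-b)^2=r^2$. *)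

From HB Require Import structures.
From mathcomp Require Import all_boot all_order all_algebra.
From mathcomp Require Import mpoly.
Set Implicit Arguments. Unset Strict Implicit. Unset Printing Implicit Defensive.
Import Order.TTheory GRing.Theory.
Local Open Scope ring_scope.

Section Conchoid.
Variable K : fieldType.

Definition pt := (K * K)%type.

Definition ev2 (p : {mpoly K[2]}) (x : pt) : K :=
  p.@[fun i : 'I_2 => if val i == 0%N then x.1 else x.2].

Definition zeroset (S : {mpoly K[2]} -> Prop) : pt -> Prop :=
  fun x => forall p, S p -> ev2 p x = 0.

Definition V (f : {mpoly K[2]}) : pt -> Prop := fun x => ev2 f x = 0.

Definition subsetP (X Y : pt -> Prop) := forall x, X x -> Y x.
Definition seteqP (X Y : pt -> Prop) := forall x, X x <-> Y x.

Definition algebraic (X : pt -> Prop) :=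
  exists S : {mpoly K[2]} -> Prop, seteqP X (zeroset S).

Definition zariski_closure (Y : pt -> Prop) : pt -> Prop :=
  fun x => forall Z, algebraic Z -> subsetP Y Z -> Z x.

Definition irreducible_set (X : pt -> Prop) :=
  [/\ algebraic X, exists x, X x &
      forall Z1 Z2, algebraic Z1 -> algebraic Z2 ->
        subsetP X (fun x => Z1 x \/ Z2 x) -> subsetP X Z1 \/ subsetP X Z2].

Definition component (M X : pt -> Prop) :=
  [/\ irreducible_set M, subsetP M X &
      forall N, irreducible_set N -> subsetP M N -> subsetP N X -> seteqP N M].

Definition mirreducible (g : {mpoly K[2]}) :=
  [/\ g != 0, g \isn't a GRing.unit &
      forall p q, g = p * q -> p \is a GRing.unit \/ q \is a GRing.unit].

Definition irreducible_curve (M : pt -> Prop) :=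
  exists g, mirreducible g /\ seteqP M (V g).

(* the incidence set B(C, A, d) projected to the x coordinates *)
Definition conchoid_proj (f : {mpoly K[2]}) (a b d : K) : pt -> Prop :=
  fun x => exists (y : pt) (w : K),
    [/\ ev2 f y = 0,
        (x.1 - y.1) ^+ 2 + (x.2 - y.2) ^+ 2 = d ^+ 2,
        (y.2 - b) * (x.1 - y.1) - (y.1 - a) * (x.2 - y.2) = 0 &
        w * ((y.1 - a) ^+ 2 + (y.2 - b) ^+ 2) = 1].

Definition conchoid (f : {mpoly K[2]}) (a b d : K) : pt -> Prop :=
  zariski_closure (conchoid_proj f a b d).

Definition C0_nonempty (f : {mpoly K[2]}) (a b : K) :=
  exists y : pt, ev2 f y = 0 /\ (y.1 - a) ^+ 2 + (y.2 - b) ^+ 2 != 0.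

Definition is_circle_at (f : {mpoly K[2]}) (a b : K) :=
  exists r : K, seteqP (V f) (fun y => (y.1 - a) ^+ 2 + (y.2 - b) ^+ 2 = r ^+ 2).

Definition is_line_through (f : {mpoly K[2]}) (a b : K) :=
  exists al be ga : K, [/\ (al != 0) || (be != 0), al * a + be * b + ga = 0 &
     seteqP (V f) (fun y => al * y.1 + be * y.2 + ga = 0)].

Definition infinite_set (D : K -> Prop) :=
  ~ exists s : seq K, forall d, D d -> d \in s.

End Conchoid.

(* Pick a point x != A on M; it suffices that x lies on [conchoid f a b d] for only
   finitely many d.  A point z != A of the incidence projection satisfies
   f (A + (r - d) / r * (z - A)) = 0 for a square root r of |z - A|^2.  In the isotropic
   coordinates u, w centred at A, where |z - A|^2 = u w, clearing denominators turns this
   into W(z, r, d) = 0 with W polynomial, and the norm W(z, r, d) W(z, -r, d) is a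
   polynomial in z vanishing on the whole conchoid away from A.  At z = x this norm is
   nonzero for all but finitely many d: for r != 0 because f does not vanish on the line
   through A and x, and for r = 0 (x on an isotropic line through A) because W was divided
   by the least power of r occurring in it. *)

From HB Require Import structures.
From mathcomp Require Import all_boot all_order all_algebra.
From mathcomp Require Import mpoly.
From mathcomp Require Import ring zify.
From Stdlib Require Import Classical.
Import GRing.Theory.
Local Open Scope ring_scope.
Set Implicit Arguments. Unset Strict Implicit. Unset Printing Implicit Defensive.

Section Evaluation.
Variable K : fieldType.
Implicit Types (p q : {mpoly K[2]}) (x : pt K).

Definition iX : 'I_2 := ord0.
Definition iY : 'I_2 := ord_max.

Lemma ord2P (j : 'I_2) : j = iX \/ j = iY.
Proof. by case: j => [[|[|]]] // H; [left|right]; apply: val_inj. Qed.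

Lemma ev2_supp p x :
  ev2 p x = \sum_(m <- msupp p) p@_m * x.1 ^+ m iX * x.2 ^+ m iY.
Proof.
rewrite /ev2 mevalE; apply: eq_bigr => m _.
rewrite !big_ord_recl big_ord0 mulr1 mulrA.
by congr (_ * _ ^+ m _); apply: val_inj.
Qed.

Lemma ev2XX x : ev2 'X_iX x = x.1. Proof. by rewrite /ev2 mevalXU. Qed.
Lemma ev2XY x : ev2 'X_iY x = x.2. Proof. by rewrite /ev2 mevalXU. Qed.
Lemma ev2C c x : ev2 c%:MP x = c. Proof. by rewrite /ev2 mevalC. Qed.
Lemma ev2D p q x : ev2 (p + q) x = ev2 p x + ev2 q x. Proof. by rewrite /ev2 rmorphD. Qed.
Lemma ev2N p x : ev2 (- p) x = - ev2 p x. Proof. by rewrite /ev2 rmorphN. Qed.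
Lemma ev2B p q x : ev2 (p - q) x = ev2 p x - ev2 q x. Proof. by rewrite /ev2 rmorphB. Qed.
Lemma ev2M p q x : ev2 (p * q) x = ev2 p x * ev2 q x. Proof. by rewrite /ev2 rmorphM. Qed.
Lemma ev2Z c p x : ev2 (c *: p) x = c * ev2 p x. Proof. by rewrite /ev2 mevalZ. Qed.
Lemma ev2Xn p k x : ev2 (p ^+ k) x = ev2 p x ^+ k. Proof. by rewrite /ev2 rmorphXn. Qed.

Definition ev2E := (ev2D, ev2B, ev2M, ev2Z, ev2N, ev2Xn, ev2XX, ev2XY, ev2C).

Lemma ev2_sum (I : Type) (r : seq I) (P : pred I) (F : I -> {mpoly K[2]}) x :
  ev2 (\sum_(i <- r | P i) F i) x = \sum_(i <- r | P i) ev2 (F i) x.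
Proof. by rewrite /ev2 rmorph_sum. Qed.

Lemma ev2_mono (m : 'X_{1..2}) x : ev2 'X_[m] x = x.1 ^+ m iX * x.2 ^+ m iY.
Proof.
rewrite /ev2 mevalX !big_ord_recl big_ord0 mulr1.
by congr (_ * _ ^+ m _); apply: val_inj.
Qed.

Lemma ev2_comp p (lq : 2.-tuple {mpoly K[2]}) x :
  ev2 (p \mPo lq) x = ev2 p (ev2 (tnth lq iX) x, ev2 (tnth lq iY) x).
Proof.
rewrite /ev2 comp_mpoly_meval; apply: meval_eq => j; by case: (ord2P j) => ->.
Qed.

Lemma ev2_unit_neq0 p x : p \is a GRing.unit -> ev2 p x != 0.
Proof.
case/unitrP => q [pq1 _]; apply/eqP => px0.
by move/(congr1 (fun r => ev2 r x))/eqP: pq1; rewrite ev2M px0 mulr0 ev2C eq_sym oner_eq0.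
Qed.

Definition subst2 p (h1 h2 : {poly K}) : {poly K} :=
  mmap (@polyC K) (fun j : 'I_2 => if val j == 0%N then h1 else h2) p.

Lemma horner_subst2 p h1 h2 t : (subst2 p h1 h2).[t] = ev2 p (h1.[t], h2.[t]).
Proof.
rewrite /subst2 /ev2 /meval /mmap horner_sum; apply: eq_bigr => m _.
rewrite hornerM hornerC /= /mmap1 horner_prod; congr (_ * _).
by apply: eq_bigr => j _; rewrite horner_exp; case: (ord2P j) => ->.
Qed.

End Evaluation.

Section CharZero.
Variable K : fieldType.
Hypothesis K0 : [pchar K] =i pred0.

Lemma pchar0_natr_inj : injective (fun n : nat => n%:R : K).
Proof.
have natr_eq0 := (pcharf0P K).1 K0.
move=> m n /= mn; wlog le_mn : m n mn / (m <= n)%N.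
  by move=> W; case: (leqP m n) => [|/ltnW] /(W _ _) => // ->.
apply/eqP; rewrite eqn_leq le_mn -subn_eq0 -natr_eq0 natrB //.
by apply/eqP; rewrite mn subrr.
Qed.

Lemma poly_eq0_horner (P : {poly K}) : (forall s, P.[s] = 0) -> P = 0.
Proof.
move=> P0; apply/eqP/negPn/negP => Pn0.
have roots : all (root P) [seq k%:R | k <- iota 0 (size P)].
  by apply/allP => z /mapP [k _ ->]; rewrite /root P0.
have := max_poly_roots Pn0 roots.
by rewrite (map_inj_uniq pchar0_natr_inj) iota_uniq size_map size_iota ltnn => /(_ isT).
Qed.

Lemma mpoly_eq0_ev2 (p : {mpoly K[2]}) : (forall x, ev2 p x = 0) -> p = 0.
Proof.
move=> p0; case Ep: (msupp p) => [|ms s]; first exact: msuppnil0.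
have ms_p : ms \in msupp p by rewrite Ep mem_head.
have row0 s0 k : \sum_(m <- msupp p) (m iY == k)%:R * (p@_m * s0 ^+ m iX) = 0.
  pose Q := \sum_(m <- msupp p) (p@_m * s0 ^+ m iX) *: 'X^(m iY).
  have /(congr1 (fun q : {poly K} => q`_k)) : Q = 0.
    apply: poly_eq0_horner => t; rewrite -(p0 (s0, t)) ev2_supp /Q horner_sum.
    by apply: eq_bigr => m _; rewrite hornerZ hornerXn.
  rewrite coef0 coef_sum => Qk0; rewrite -[RHS]Qk0.
  by apply: eq_bigr => m _; rewrite coefZ coefXn eq_sym mulrC.
pose R := \sum_(m <- msupp p) ((m iY == ms iY)%:R * p@_m) *: 'X^(m iX).
have /(congr1 (fun q : {poly K} => q`_(ms iX))) : R = 0.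
  apply: poly_eq0_horner => s0; rewrite -(row0 s0 (ms iY)) /R horner_sum.
  by apply: eq_bigr => m _; rewrite hornerZ hornerXn mulrA.
rewrite coef0 /R coef_sum (bigD1_seq ms ms_p (msupp_uniq p)) /= coefZ coefXn !eqxx.
rewrite mul1r mulr1 big1_seq ?addr0 => [/eqP|m /andP [m_ms _]].
  by rewrite mcoeff_eq0 ms_p.
rewrite coefZ coefXn; case: (eqVneq (m iY) (ms iY)) => EY; last by rewrite !mul0r.
case: (eqVneq (ms iX) (m iX)) => EX; last by rewrite mulr0.
by case/eqP: m_ms; apply/mnmP => j; case: (ord2P j) => ->.
Qed.

End CharZero.

Lemma poly_roots_finite (R : idomainType) (P : {poly R}) :
  P != 0 -> exists rs : seq R, forall z, root P z -> z \in rs.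
Proof.
elim: (size P) {-2}P (leqnn (size P)) => [|n IH] Q szQ Q_neq0.
  by move: Q_neq0; rewrite -size_poly_eq0 -leqn0 szQ.
have [[z /factor_theorem [Q' QE]] | no_root] := classic (exists z, root Q z); last first.
  by exists [::] => z Qz; case: no_root; exists z.
have Q'_neq0 : Q' != 0 by apply: contraNneq Q_neq0; rewrite QE => ->; rewrite mul0r.
have [|rs Q'rs] := IH Q' _ Q'_neq0.
  by move: szQ; rewrite QE size_mul ?polyXsubC_eq0 // size_XsubC addn2.
exists (z :: rs) => y; rewrite QE rootM root_XsubC in_cons.
by case/orP => [/Q'rs -> | ->]; rewrite ?orbT.
Qed.

Section Line.
Variable K : fieldType.
Hypothesis K0 : [pchar K] =i pred0.

Lemma mpoly_vanish_axis (p : {mpoly K[2]}) :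
  (forall s, ev2 p (s, 0) = 0) -> exists q, p = 'X_iY * q.
Proof.
move=> p0; pose q := \sum_(m <- msupp p | m iY != 0%N) p@_m *: 'X_[m - U_(iY)].
pose r := \sum_(m <- msupp p | m iY == 0%N) p@_m *: 'X_[m].
have Ep : p = 'X_iY * q + r.
  rewrite {1}(mpolyE p) (bigID (fun m : 'X_{1..2} => m iY == 0%N)) /= addrC.
  congr (_ + _); rewrite mulr_sumr; apply: eq_bigr => m mY.
  rewrite -scalerAr -mpolyXD; congr (_ *: 'X_[_]); apply/mnmP => j.
  rewrite mnmDE mnmBE mnm1E; case: (eqVneq iY j) => [<-|_] /=; last by rewrite subn0.
  by rewrite subnKC // lt0n.
have r_axis x : ev2 r x = ev2 r (x.1, 0).
  rewrite !ev2_sum; apply: eq_bigr => m /eqP mY.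
  by rewrite !ev2Z !ev2_mono mY !expr0.
have r0 : r = 0.
  apply: (mpoly_eq0_ev2 K0) => x; rewrite r_axis.
  by have := p0 x.1; rewrite {1}Ep ev2D ev2M ev2XY mul0r add0r.
by exists q; rewrite {1}Ep r0 addr0.
Qed.

Lemma mpoly_vanish_line (f : {mpoly K[2]}) (a b p q : K) :
  (p != 0) || (q != 0) -> (forall t, ev2 f (a + t * p, b + t * q) = 0) ->
  exists h, f = (p *: ('X_iY - b%:MP) - q *: ('X_iX - a%:MP)) * h.
Proof.
move=> pq_neq0 f_line.
have [e1 [e2 det_neq0]] : exists e1 e2, p * e2 - q * e1 != 0.
  case/orP: pq_neq0 => [p_neq0 | q_neq0]; first by exists 0, 1; rewrite mulr1 mulr0 subr0.
  by exists 1, 0; rewrite mulr0 mulr1 sub0r oppr_eq0.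
set det := p * e2 - q * e1 in det_neq0.
pose phi : 2.-tuple {mpoly K[2]} :=
  [tuple a%:MP + p *: 'X_iX + e1 *: 'X_iY; b%:MP + q *: 'X_iX + e2 *: 'X_iY].
pose psi : 2.-tuple {mpoly K[2]} :=
  [tuple det^-1 *: (e2 *: ('X_iX - a%:MP) - e1 *: ('X_iY - b%:MP));
         det^-1 *: (p *: ('X_iY - b%:MP) - q *: ('X_iX - a%:MP))].
have ev_fphi x : ev2 (f \mPo phi) x =
    ev2 f (a + p * x.1 + e1 * x.2, b + q * x.1 + e2 * x.2).
  by rewrite ev2_comp /= !ev2E.
have [h fphi_h] : exists h, f \mPo phi = 'X_iY * h.
  apply: mpoly_vanish_axis => s; rewrite ev_fphi /= !mulr0 !addr0 ![_ * s]mulrC.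
  exact: f_line.
exists (det^-1 *: (h \mPo psi)).
apply/eqP; rewrite -subr_eq0; apply/eqP; apply: (mpoly_eq0_ev2 K0) => x.
rewrite ev2B ev2M ev2Z ev2_comp.
have -> : ev2 f x = ev2 (f \mPo phi) (ev2 (tnth psi iX) x, ev2 (tnth psi iY) x).
  rewrite ev_fphi /= !ev2E; congr (ev2 f _).
  by rewrite [LHS]surjective_pairing /det; congr (_, _); field.
by rewrite fphi_h ev2M ev2XY /= !ev2E; ring.
Qed.

Lemma line_through_of_vanish (f : {mpoly K[2]}) (a b p q : K) :
  (p != 0) || (q != 0) -> mirreducible f ->
  (forall t, ev2 f (a + t * p, b + t * q) = 0) -> is_line_through f a b.
Proof.
move=> pq_neq0 [_ _ f_irr] /(mpoly_vanish_line pq_neq0) [h fE].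
set L := _ - _ in fE.
have ev_L x : ev2 L x = p * (x.2 - b) - q * (x.1 - a) by rewrite /L !ev2E.
have [L_unit | h_unit] := f_irr _ _ fE.
  by have := ev2_unit_neq0 (a, b) L_unit; rewrite ev_L !subrr !mulr0 subrr eqxx.
exists (- q), p, (q * a - p * b); split=> [| | x]; [by rewrite oppr_eq0 orbC | by ring |].
rewrite /V fE ev2M ev_L.
have -> : p * (x.2 - b) - q * (x.1 - a) = - q * x.1 + p * x.2 + (q * a - p * b) by ring.
split => [/eqP|->]; last by rewrite mul0r.
by rewrite mulf_eq0 (negbTE (ev2_unit_neq0 x h_unit)) orbF => /eqP.
Qed.

End Line.

Section ClosedField.
Variable K : closedFieldType.
Hypothesis K0 : [pchar K] =i pred0.

Lemma closed_sqrt (c : K) : exists r, r ^+ 2 = c.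
Proof.
have /closed_rootP [r] : size ('X^2 - c%:P : {poly K}) != 1%N by rewrite size_XnsubC.
by rewrite /root !hornerE subr_eq0 => /eqP; exists r.
Qed.

Lemma mirreducible_zero_neq (g : {mpoly K[2]}) (a b : K) :
  mirreducible g -> exists2 x, ev2 g x = 0 & x != (a, b).
Proof.
move=> [g_neq0 g_nunit _].
pose col c := subst2 g c%:P 'X.
have [[c [c_a /closed_rootP [t /rootP gct]]] | col_const] :=
  classic (exists c, c != a /\ size (col c) != 1%N).
  exists (c, t); first by rewrite -gct horner_subst2 hornerC hornerX.
  by apply: contraNneq c_a => -[-> _].
pose row := subst2 g 'X (b + 1)%:P.
have b1_b : b + 1 != b by rewrite -subr_eq0 addrAC subrr add0r oner_eq0.
have [/closed_rootP [s /rootP gsb] | /negPn/eqP row1] := boolP (size row != 1%N).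
  exists (s, b + 1); first by rewrite -gsb horner_subst2 hornerC hornerX.
  by apply: contraNneq b1_b => -[_ ->].
have g_row x : x.1 != a -> ev2 g x = row`_0.
  move=> x1_a; have /eqP col1 : size (col x.1) == 1%N.
    by apply/negPn/negP => col_n1; apply: col_const; exists x.1.
  have col_t t : (col x.1).[t] = ev2 g (x.1, t) by rewrite horner_subst2 hornerC hornerX.
  have row_s : row.[x.1] = ev2 g (x.1, b + 1) by rewrite horner_subst2 hornerC hornerX.
  have [colC rowC] := (size1_polyC (eq_leq col1), size1_polyC (eq_leq row1)).
  rewrite [x]surjective_pairing -col_t colC hornerC.
  have := col_t (b + 1); rewrite colC hornerC => ->.
  by rewrite -row_s rowC hornerC.
have /eqP : ('X_iX - a%:MP) * (g - (row`_0)%:MP) = 0.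
  apply: (mpoly_eq0_ev2 K0) => x; rewrite !ev2E.
  by case: (eqVneq x.1 a) => [->|/g_row ->]; rewrite subrr ?mul0r ?mulr0.
rewrite mulf_eq0 => /orP [/eqP Xa0|].
  by move/(congr1 (fun p => ev2 p (a + 1, 0)))/eqP: Xa0; rewrite !ev2E addrAC subrr add0r oner_eq0.
rewrite subr_eq0 => /eqP g_const; move: g_nunit g_neq0; rewrite g_const.
case: (eqVneq row`_0 0) => [-> | c_neq0]; first by rewrite mpolyC0 eqxx.
suff -> : (row`_0)%:MP_[2] \is a GRing.unit by [].
by apply/unitrP; exists (row`_0)^-1%:MP; rewrite -!mpolyCM mulVf ?mulfV.
Qed.

End ClosedField.

Lemma collinear_scale (K : fieldType) (x1 x2 y1 y2 : K) :
  y2 * x1 = y1 * x2 -> (x1 != 0) || (x2 != 0) ->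
  exists t, y1 = t * x1 /\ y2 = t * x2.
Proof.
move=> col; case: (eqVneq x1 0) => [x1_0 /= x2_neq0 | x1_neq0 _].
  exists (y2 / x2); split; last by rewrite divfK.
  move/eqP: col; rewrite x1_0 mulr0 eq_sym mulf_eq0 (negbTE x2_neq0) orbF => /eqP ->.
  by rewrite mulr0.
by exists (y1 / x1); split; [rewrite divfK | apply: (mulIf x1_neq0); rewrite col; field].
Qed.

Lemma pt_neq_subr (K : zmodType) (x : K * K) (a b : K) :
  x != (a, b) -> (x.1 - a != 0) || (x.2 - b != 0).
Proof.
apply: contraNT; rewrite negb_or !negbK !subr_eq0 => /andP [/eqP <- /eqP <-].
by rewrite -surjective_pairing.
Qed.

Section Conchoid.
Variable K : fieldType.
Hypothesis K0 : [pchar K] =i pred0.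
Variables (f : {mpoly K[2]}) (a b i : K).
Hypothesis i2 : i * i = -1.

Lemma two_neq0 : 2 != 0 :> K.
Proof. by rewrite ((pcharf0P K).1 K0 2). Qed.

Lemma sqrtN1_neq0 : i != 0.
Proof. by apply/eqP => i0; move/eqP: i2; rewrite i0 mul0r eq_sym oppr_eq0 oner_eq0. Qed.

Definition ucoord (x : pt K) := (x.2 - b) - i * (x.1 - a).
Definition wcoord (x : pt K) := (x.2 - b) + i * (x.1 - a).

Lemma norm_uw x : (x.1 - a) ^+ 2 + (x.2 - b) ^+ 2 = ucoord x * wcoord x.
Proof.
rewrite /ucoord /wcoord; have -> : (x.2 - b - i * (x.1 - a)) * (x.2 - b + i * (x.1 - a)) =
  (x.2 - b) ^+ 2 - (i * i) * (x.1 - a) ^+ 2 by ring.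
by rewrite i2; ring.
Qed.

(* The inverse of the change of coordinates [x |-> (ucoord x, wcoord x)]. *)
Definition uw_to_xy : 2.-tuple {mpoly K[2]} :=
  [tuple a%:MP + (2 * i)^-1 *: ('X_iY - 'X_iX); b%:MP + 2^-1 *: ('X_iX + 'X_iY)].
Definition fuw := f \mPo uw_to_xy.

Lemma ev2_ray x t :
  ev2 f (a + t * (x.1 - a), b + t * (x.2 - b)) = ev2 fuw (t * ucoord x, t * wcoord x).
Proof.
rewrite /fuw ev2_comp /= !ev2E /=; congr (ev2 f (_, _)); rewrite /ucoord /wcoord.
  by field; rewrite two_neq0 sqrtN1_neq0.
by field; rewrite two_neq0.
Qed.

Lemma mdeg2 (m : 'X_{1..2}) : mdeg m = (m iX + m iY)%N.
Proof. by rewrite mdegE big_ord_recl big_ord1; congr (_ + m _)%N; apply: val_inj. Qed.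

Lemma fuw_supp_deg m : m \in msupp fuw -> (m iX + m iY < msize fuw)%N.
Proof. by move/msize_mdeg_lt; rewrite mdeg2. Qed.

(* With [n = msize fuw], the monomial [u ^ m0 w ^ m1] times [r ^ (n - m0 - m1) w ^ n]
   becomes [r ^ (rexp m) w ^ (n - m0 + m1)] once [u] is replaced by [r ^ 2 / w]. *)
Definition rexp (m : 'X_{1..2}) := (msize fuw + m iX - m iY)%N.

Variable e0 : nat.
Hypothesis e0_le : forall m, m \in msupp fuw -> (e0 <= rexp m)%N.

Definition Wr (x : pt K) (r d : K) :=
  \sum_(m <- msupp fuw) fuw@_m * wcoord x ^+ (msize fuw - m iX + m iY)
      * (r - d) ^+ (m iX + m iY) * r ^+ (rexp m - e0).

Lemma rsqr_monomial (c w u r t : K) (j k s : nat) : r ^+ 2 = u * w ->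
  c * w ^+ (k + s + k) * (t * r) ^+ (j + k) * r ^+ (j + s + j) =
  r ^+ (j + k + s) * w ^+ (j + k + s) * (c * (t * u) ^+ j * (t * w) ^+ k).
Proof.
move=> ruw; have rj2 : r ^+ j * r ^+ j = u ^+ j * w ^+ j.
  by rewrite -exprD addnn -mul2n exprM ruw exprMn.
rewrite !exprD !exprMn; move: rj2.
move: (r ^+ j) (r ^+ k) (r ^+ s) (w ^+ j) (w ^+ k) (w ^+ s) (u ^+ j) (t ^+ j) (t ^+ k).
move=> rj rk rs wj wk ws uj tj tk rj2.
transitivity ((rj * rj) * (c * wk * ws * wk * tj * tk * rj * rk * rs)); first by ring.
by rewrite rj2; ring.
Qed.

Lemma Wr_ray x r d : r != 0 -> r ^+ 2 = ucoord x * wcoord x ->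
  Wr x r d * r ^+ e0 = r ^+ msize fuw * wcoord x ^+ msize fuw *
    ev2 f (a + (r - d) / r * (x.1 - a), b + (r - d) / r * (x.2 - b)).
Proof.
move=> r_neq0 ruw; rewrite ev2_ray ev2_supp /Wr mulr_suml mulr_sumr.
apply: eq_big_seq => m m_supp; have m_deg := fuw_supp_deg m_supp.
rewrite -mulrA -exprD subnK ?e0_le //.
set t := (r - d) / r; have -> : r - d = t * r by rewrite /t divfK.
have [s deg_s] : exists s, msize fuw = (m iX + m iY + s)%N.
  by exists (msize fuw - (m iX + m iY))%N; lia.
have -> : (msize fuw - m iX + m iY = m iY + s + m iY)%N by rewrite deg_s; lia.
have -> : rexp m = (m iX + s + m iX)%N by rewrite /rexp deg_s; lia.
by rewrite deg_s (rsqr_monomial _ _ _ _ _ ruw) !mulrA.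
Qed.

Definition upol : {mpoly K[2]} := ('X_iY - b%:MP) - i *: ('X_iX - a%:MP).
Definition wpol : {mpoly K[2]} := ('X_iY - b%:MP) + i *: ('X_iX - a%:MP).

Lemma ev2_upol x : ev2 upol x = ucoord x. Proof. by rewrite /upol !ev2E. Qed.
Lemma ev2_wpol x : ev2 wpol x = wcoord x. Proof. by rewrite /wpol !ev2E. Qed.

Definition Wpoly (d : K) : {poly {mpoly K[2]}} :=
  \sum_(m <- msupp fuw) ((fuw@_m)%:MP * wpol ^+ (msize fuw - m iX + m iY))%:P
      * ('X - (d%:MP)%:P) ^+ (m iX + m iY) * 'X ^+ (rexp m - e0).

(* [Wpoly d] reduced modulo [r ^+ 2 - u w] is [R0 + R1 r]; its norm [R0 ^+ 2 - u w R1 ^+ 2]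
   eliminates the square root [r] of [(x1 - a) ^+ 2 + (x2 - b) ^+ 2], see [ev2_cnorm]. *)
Definition rsqr_rel : {poly {mpoly K[2]}} := 'X^2 - (upol * wpol)%:P.
Definition Wrem (d : K) := Pdiv.Ring.rmodp (Wpoly d) rsqr_rel.
Definition cnorm (d : K) : {mpoly K[2]} :=
  (Wrem d)`_0 ^+ 2 - upol * wpol * (Wrem d)`_1 ^+ 2.

Definition ptv (x : pt K) (j : 'I_2) : K := if val j == 0%N then x.1 else x.2.

Lemma horner_Wpoly x r d : (map_poly (meval (ptv x)) (Wpoly d)).[r] = Wr x r d.
Proof.
rewrite /Wpoly rmorph_sum horner_sum; apply: eq_bigr => m _.
rewrite !rmorphM !rmorphXn /= rmorphB /= !map_polyC map_polyX !hornerE.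
by congr (_ * _ ^+ _ * (_ - _) ^+ _ * _); [exact: mevalC | exact: ev2_wpol | exact: mevalC].
Qed.

Lemma Wr_Wrem x r d : r ^+ 2 = ucoord x * wcoord x ->
  Wr x r d = ev2 (Wrem d)`_0 x + ev2 (Wrem d)`_1 x * r.
Proof.
move=> ruw; have rel_monic : rsqr_rel \is monic by apply: monicXnsubC.
have size_rem : (size (Wrem d) <= 2)%N.
  by have := Pdiv.Ring.ltn_rmodpN0 (Wpoly d) (monic_neq0 rel_monic); rewrite size_XnsubC.
rewrite -horner_Wpoly (Pdiv.RingMonic.rdivp_eq rel_monic (Wpoly d)) -/(Wrem d).
rewrite rmorphD rmorphM /= hornerD hornerM.
have -> : (map_poly (meval (ptv x)) rsqr_rel).[r] = 0.
  rewrite /rsqr_rel rmorphB /= map_polyXn map_polyC hornerD hornerN hornerXn hornerC.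
  by transitivity (r ^+ 2 - ev2 (upol * wpol) x); rewrite // ev2M ev2_upol ev2_wpol ruw subrr.
rewrite mulr0 add0r (horner_coef_wide (n := 2)); last exact: leq_trans (size_poly _ _) size_rem.
by rewrite big_ord_recr big_ord1 /= !coef_map expr0 mulr1 expr1.
Qed.

Lemma ev2_cnorm x r d : r ^+ 2 = ucoord x * wcoord x ->
  ev2 (cnorm d) x = Wr x r d * Wr x (- r) d.
Proof.
move=> ruw; have ruw' : (- r) ^+ 2 = ucoord x * wcoord x by rewrite sqrrN.
rewrite (Wr_Wrem _ ruw) (Wr_Wrem _ ruw').
by rewrite /cnorm ev2B ev2M !ev2Xn ev2M ev2_upol ev2_wpol -ruw; ring.
Qed.

Lemma Wr_conchoid_proj x d : d != 0 -> conchoid_proj f a b d x -> x != (a, b) ->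
  exists2 r, r ^+ 2 = ucoord x * wcoord x & Wr x r d = 0.
Proof.
move=> d_neq0 [y [_ [fy y_dist y_col _]]] x_notA.
have [t [y1E y2E]] : exists t, y.1 - a = t * (x.1 - a) /\ y.2 - b = t * (x.2 - b).
  apply: collinear_scale; first by apply/eqP; rewrite -subr_eq0 -y_col; apply/eqP; ring.
  exact: pt_neq_subr.
have t_dist : (1 - t) ^+ 2 * (ucoord x * wcoord x) = d ^+ 2.
  rewrite -norm_uw -y_dist.
  have -> : x.1 - y.1 = (1 - t) * (x.1 - a) by rewrite mulrBl mul1r -y1E; ring.
  have -> : x.2 - y.2 = (1 - t) * (x.2 - b) by rewrite mulrBl mul1r -y2E; ring.
  ring.
have t_neq1 : 1 - t != 0.
  apply: contraNneq d_neq0 => t1; move/eqP: t_dist.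
  by rewrite t1 expr0n mul0r eq_sym expf_eq0 => /andP [].
have r_neq0 : d / (1 - t) != 0 by rewrite mulf_neq0 ?invr_eq0.
have ruw : (d / (1 - t)) ^+ 2 = ucoord x * wcoord x.
  by rewrite expr_div_n -t_dist mulrAC divff ?mul1r ?expf_neq0.
exists (d / (1 - t)) => //.
apply: (mulIf (expf_neq0 e0 r_neq0)); rewrite mul0r Wr_ray //.
have -> : (d / (1 - t) - d) / (d / (1 - t)) = t.
  by field; rewrite d_neq0 t_neq1.
by rewrite -y1E -y2E !subrKC -surjective_pairing fy mulr0.
Qed.

Lemma cnorm_conchoid x d : d != 0 -> conchoid f a b d x -> x != (a, b) -> ev2 (cnorm d) x = 0.
Proof.
move=> d_neq0 x_conch x_notA.
pose S p := p = cnorm d * ('X_iX - a%:MP) \/ p = cnorm d * ('X_iY - b%:MP).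
have x_S : zeroset S x.
  apply: x_conch => [|z z_proj]; first by exists S.
  have [-> | z_notA] := eqVneq z (a, b); first by move=> p [->|->]; rewrite !ev2E !subrr !mulr0.
  have [r ruw Wr0] := Wr_conchoid_proj d_neq0 z_proj z_notA.
  by move=> p [->|->]; rewrite ev2M (ev2_cnorm _ ruw) Wr0 !mul0r.
apply/eqP; apply: contraNT x_notA => cn_neq0.
have /eqP := x_S _ (or_introl erefl).
rewrite ev2M mulf_eq0 (negbTE cn_neq0) /= !ev2E subr_eq0 => /eqP x1a.
have /eqP := x_S _ (or_intror erefl).
rewrite ev2M mulf_eq0 (negbTE cn_neq0) /= !ev2E subr_eq0 => /eqP x2b.
by rewrite [x]surjective_pairing x1a x2b.
Qed.

Lemma Wr0_poly x : (exists2 ms, ms \in msupp fuw & rexp ms = e0) -> wcoord x != 0 ->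
  exists2 P : {poly K}, P != 0 & forall d, Wr x 0 d = P.[d].
Proof.
move=> [ms ms_supp ms_e0] w_neq0.
pose c m := fuw@_m * wcoord x ^+ (msize fuw - m iX + m iY) * 0 ^+ (rexp m - e0)
              * (-1) ^+ (m iX + m iY).
exists (\sum_(m <- msupp fuw) c m *: 'X^(m iX + m iY)); last first.
  move=> d; rewrite horner_sum /Wr; apply: eq_bigr => m _.
  rewrite hornerZ hornerXn sub0r (exprNn d) /c.
  move: (fuw@_m) (wcoord x ^+ _) ((-1) ^+ _ : K) (d ^+ _) (0 ^+ _ : K) => c1 c2 c3 c4 c5.
  ring.
apply/eqP => /(congr1 (fun P : {poly K} => P`_(ms iX + ms iY))).
rewrite coef0 coef_sum (bigD1_seq ms ms_supp (msupp_uniq _)) /= coefZ coefXn eqxx mulr1.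
rewrite big1_seq ?addr0 => [/eqP|m /andP [m_ms m_supp]]; last first.
  rewrite coefZ coefXn.
  case: (eqVneq (m iX + m iY)%N (ms iX + ms iY)%N) => deg_m; last by rewrite mulr0.
  case: (eqVneq (rexp m) e0) => e_m.
    case/eqP: m_ms; have := fuw_supp_deg m_supp; have := fuw_supp_deg ms_supp.
    move: e_m ms_e0 deg_m; rewrite /rexp => e_m ms_e0 deg_m ms_deg m_deg.
    by apply/mnmP => j; case: (ord2P j) => ->; lia.
  have e_m_pos : (rexp m - e0 != 0)%N by move: (e0_le m_supp) e_m; lia.
  by rewrite /c expr0n (negbTE e_m_pos) /= mulr0 !mul0r.
rewrite /c ms_e0 subnn expr0 mulr1 !mulf_eq0 !expf_eq0 (negbTE w_neq0) andbF orbF.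
by rewrite oppr_eq0 oner_eq0 andbF orbF mcoeff_eq0 ms_supp.
Qed.

Lemma Wr_neq0_generic x r :
  (exists2 ms, ms \in msupp fuw & rexp ms = e0) -> wcoord x != 0 ->
  r ^+ 2 = ucoord x * wcoord x ->
  (exists t, ev2 f (a + t * (x.1 - a), b + t * (x.2 - b)) != 0) ->
  exists s : seq K, forall d, d \notin s -> Wr x r d != 0.
Proof.
move=> e0_min w_neq0 ruw [t0 ft0].
have [r0 | r_neq0] := eqVneq r 0.
  have [P P_neq0 WP] := Wr0_poly e0_min w_neq0.
  have [rs P_rs] := poly_roots_finite P_neq0.
  by exists rs => d; apply: contra => /eqP; rewrite r0 WP => /rootP /P_rs.
pose F := subst2 f (a%:P + (x.1 - a) *: 'X) (b%:P + (x.2 - b) *: 'X).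
have F_ray z : F.[z] = ev2 f (a + z * (x.1 - a), b + z * (x.2 - b)).
  by rewrite horner_subst2 !hornerE ![_ * z]mulrC.
have F_neq0 : F != 0 by apply: contraNneq ft0 => F0; rewrite -F_ray F0 horner0.
have [rs F_rs] := poly_roots_finite F_neq0.
exists [seq r * (1 - z) | z <- rs] => d; apply: contra => /eqP Wr0.
apply/mapP; exists ((r - d) / r); last by field.
apply/F_rs/rootP; rewrite F_ray.
have /eqP := Wr_ray d r_neq0 ruw; rewrite Wr0 mul0r eq_sym !mulf_eq0 !expf_eq0.
by rewrite (negbTE r_neq0) (negbTE w_neq0) !andbF /= => /eqP.
Qed.

End Conchoid.

Section Finiteness.
Variable K : closedFieldType.
Hypothesis K0 : [pchar K] =i pred0.

Lemma exists_sqrtN1_wcoord (a b : K) (x : pt K) :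
  x != (a, b) -> exists2 i : K, i * i = -1 & wcoord a b i x != 0.
Proof.
move=> x_notA; have [j] := closed_sqrt (-1 : K); rewrite expr2 => j2.
have [w_j | ] := eqVneq (wcoord a b j x) 0; last by exists j.
exists (- j); first by rewrite mulrNN.
apply: contraTneq (pt_neq_subr x_notA) => w_mj.
have x2b : x.2 - b = 0.
  apply: (mulfI (two_neq0 K0)); rewrite mulr0 -[RHS](addr0 0) -{1}w_j -w_mj /wcoord; ring.
have x1a : x.1 - a = 0.
  by move/eqP: w_j; rewrite /wcoord x2b add0r mulf_eq0 (negbTE (sqrtN1_neq0 j2)) => /eqP.
by rewrite x1a x2b eqxx.
Qed.

Lemma conchoid_distances_finite (f : {mpoly K[2]}) (a b : K) (x : pt K) :
  mirreducible f -> ~ is_line_through f a b -> x != (a, b) ->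
  exists s : seq K, forall d, d != 0 -> conchoid f a b d x -> d \in s.
Proof.
move=> f_irr f_nline x_notA.
have [i i2 w_neq0] := exists_sqrtN1_wcoord x_notA.
have [r ruw] := closed_sqrt (ucoord a b i x * wcoord a b i x).
have f_ray : exists t, ev2 f (a + t * (x.1 - a), b + t * (x.2 - b)) != 0.
  apply: NNPP => f_ray0; apply/f_nline/(line_through_of_vanish K0 (pt_neq_subr x_notA) f_irr).
  by move=> t; apply: NNPP => ft; apply: f_ray0; exists t; apply/eqP.
have supp_fuw : exists n, has (fun m => rexp f a b i m == n) (msupp (fuw f a b i)).
  case E: (msupp (fuw f a b i)) => [|m ms]; last by exists (rexp f a b i m); rewrite /= eqxx.
  by case: f_ray => t; rewrite (ev2_ray K0 f a b i2) (msuppnil0 E) /ev2 rmorph0 eqxx.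
case: (ex_minnP supp_fuw) => e0 /hasP [ms ms_supp /eqP ms_e0] e0_min.
have e0_le m : m \in msupp (fuw f a b i) -> (e0 <= rexp f a b i m)%N.
  by move=> m_supp; apply: e0_min; apply/hasP; exists m.
have e0_attained : exists2 ms, ms \in msupp (fuw f a b i) & rexp f a b i ms = e0 by exists ms.
have [s1 s1_Wr] := Wr_neq0_generic K0 i2 e0_le e0_attained w_neq0 ruw f_ray.
have [s2 s2_Wr] := Wr_neq0_generic K0 i2 e0_le e0_attained w_neq0 (etrans (sqrrN r) ruw) f_ray.
exists (s1 ++ s2) => d d_neq0 x_conch; rewrite mem_cat; apply: contraT.
rewrite negb_or => /andP [d_s1 d_s2].
have := cnorm_conchoid K0 i2 e0_le d_neq0 x_conch x_notA.
rewrite (ev2_cnorm _ _ _ ruw) => /eqP.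
by rewrite mulf_eq0 (negbTE (s1_Wr d d_s1)) (negbTE (s2_Wr d d_s2)).
Qed.

End Finiteness.

Unset Implicit Arguments. Set Strict Implicit.

Theorem lemma4 (K : closedFieldType) (Hchar : [pchar K] =i pred0)
  (f : {mpoly K[2]}) (a b : K) :
  mirreducible f ->
  C0_nonempty f a b ->
  ~ is_circle_at f a b ->
  ~ is_line_through f a b ->
  ~ (exists (D : K -> Prop) (M : pt K -> Prop),
        [/\ infinite_set D, (forall d, D d -> d != 0), irreducible_curve M &
            forall d, D d -> component M (conchoid f a b d)]).
Proof.
move=> f_irr _ _ f_nline [D [M [D_inf D_neq0 [g [g_irr M_g]] M_comp]]].
have [x gx x_notA] := mirreducible_zero_neq Hchar a b g_irr.
have [s s_conch] := conchoid_distances_finite Hchar f_irr f_nline x_notA.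
apply: D_inf; exists s => d Dd; apply: s_conch (D_neq0 d Dd) _.
by have [_ M_sub _] := M_comp d Dd; apply: M_sub; apply/M_g.
Qed.
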